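(* Let $\mathbf{p}$ be a finite list of distinct predicate constants (the explainable symbols), and let $C$, $L$, $S$, $D$ be finite sets of causal rules of types C, L, S and D respectively (with respect to $\mathbf{p}$). Let $T$ be the causal theory with explainable symbols $\mathbf{p}$ and set of rules $C\cup L\cup S\cup D$. Then the second-order sentence $\mathrm{SM}_{\mathbf{p}\widehat{\mathbf{p}}}[\mathrm{tr}[C,L,S,D]]$ is logically equivalent to $T\land CC$.
   Context: Formulas are first-order formulas built from $\top,\bot,\neg,\land,\lor,\to$ and quantifiers; $\widetilde\forall F$ denotes the universal closure of $F$. Throughout, the bodies of causal rules contain no implication $\to$. Causal theories. A causal theory $T$ is given by a list $\mathbf{p}$ of distinct predicate constants (explainable symbols; equality is not among them) and a finite set of causal rules $F\Leftarrow G$, where $F,G$ are first-order formulas. For each $p\in\mathbf{p}$ choose a new predicate variable $u_p$ of the same arity; let $\mathbf{u}$ be the list of these. $T^\dagger(\mathbf{u})$ is the conjunction of the formulas $\forall\mathbf{x}(G\to F^{\mathbf{p}}_{\mathbf{u}})$ over all rules $F\Leftarrow G$ of $T$, where $\mathbf{x}$ lists the free variables of $F,G$ and $F^{\mathbf{p}}_{\mathbf{u}}$ is the result of replacing each $p$ by $u_p$. $T$ is identified with the sentence $\forall\mathbf{u}(T^\dagger(\mathbf{u})\leftrightarrow(\mathbf{u}=\mathbf{p}))$, where $\mathbf{u}=\mathbf{p}$ is the conjunction of $\forall\mathbf{x}(u_p(\mathbf{x})\leftrightarrow p(\mathbf{x}))$ for all $p\in\mathbf{p}$. Rule types: a C-rule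 is $\bot\Leftarrow G$; an L-rule has head a literal whose predicate is in $\mathbf{p}$; an S-rule has head $L_1\leftrightarrow L_2$ with $L_1,L_2$ literals whose predicates are in $\mathbf{p}$; a D-rule has head $L_1\lor\dots\lor L_n$ ($n\ge 0$), each $L_i$ a literal with predicate in $\mathbf{p}$, i.e. it has the form $\bigvee_{A\in Pos}A\lor\bigvee_{A\in Neg}\neg A\Leftarrow G$ for sets $Pos,Neg$ of atomic formulas. Stable models. A program rule is a sentence $\widetilde\forall(F\to G)$ with no other occurrence of $\to$ (a sentence without $\to$ is identified with $\top\to F$); a logic program is a conjunction of program rules. For predicate constants (or variables) $p,q$ of the same arity, $p\le q$ is $\forall\mathbf{x}(p(\mathbf{x})\to q(\mathbf{x}))$; for tuples, $\mathbf{p}\le\mathbf{q}$ is the conjunction componentwise, and $\mathbf{p}<\mathbf{q}$ is $(\mathbf{p}\le\mathbf{q})\land\neg(\mathbf{q}\le\mathbf{p})$. For a list $\mathbf{q}$ of intensional predicates with corresponding new predicate variables $\mathbf{w}$, and a logic program $F$, $\mathrm{SM}_{\mathbf{q}}[F]$ is $F\land\neg\exists\mathbf{w}((\mathbf{w}<\mathbf{q})\land F^\diamond(\mathbf{w}))$, where $F^\diamond(\mathbf{w})$ is obtained from $F$ by replacing each occurrence of each $q\in\mathbf{q}$ that is not in the scope of negation $\neg$ by the corresponding variable. Translation. For each $p\in\mathbf{p}$ let $\widehat{p}$ be a new predicate constant of the same arity; $\widehat{\mathbf{p}}$ is the list of these; for an atom $A=p(\mathbf{t})$ with $p\in\mathbf{p}$,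 $\widehat A$ denotes $\widehat p(\mathbf{t})$. $CC$ is the conjunction, over all $p\in\mathbf{p}$, of $\forall\mathbf{x}\neg(p(\mathbf{x})\land\widehat p(\mathbf{x}))$ and $\forall\mathbf{x}\neg(\neg p(\mathbf{x})\land\neg\widehat p(\mathbf{x}))$. Define: $\mathrm{tr}_c[\bot\Leftarrow G]=\widetilde\forall\neg G$; $\mathrm{tr}_l[p(\mathbf{t})\Leftarrow G]=\widetilde\forall(\neg\neg G\to p(\mathbf{t}))$, $\mathrm{tr}_l[\neg p(\mathbf{t})\Leftarrow G]=\widetilde\forall(\neg\neg G\to\widehat p(\mathbf{t}))$; $\mathrm{tr}_s[p_1(\mathbf{t}^1)\leftrightarrow p_2(\mathbf{t}^2)\Leftarrow G]=\mathrm{tr}_s[\neg p_1(\mathbf{t}^1)\leftrightarrow\neg p_2(\mathbf{t}^2)\Leftarrow G]$ is the conjunction of $\widetilde\forall(\neg\neg G\land p_1(\mathbf{t}^1)\to p_2(\mathbf{t}^2))$, $\widetilde\forall(\neg\neg G\land p_2(\mathbf{t}^2)\to p_1(\mathbf{t}^1))$, $\widetilde\forall(\neg\neg G\land \widehat{p_1}(\mathbf{t}^1)\to \widehat{p_2}(\mathbf{t}^2))$, $\widetilde\forall(\neg\neg G\land \widehat{p_2}(\mathbf{t}^2)\to \widehat{p_1}(\mathbf{t}^1))$; $\mathrm{tr}_s[\neg p_1(\mathbf{t}^1)\leftrightarrow p_2(\mathbf{t}^2)\Leftarrow G]=\mathrm{tr}_s[p_1(\mathbf{t}^1)\leftrightarrow\neg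 p_2(\mathbf{t}^2)\Leftarrow G]$ is the conjunction of $\widetilde\forall(\neg\neg G\land \widehat{p_1}(\mathbf{t}^1)\to p_2(\mathbf{t}^2))$, $\widetilde\forall(\neg\neg G\land p_2(\mathbf{t}^2)\to \widehat{p_1}(\mathbf{t}^1))$, $\widetilde\forall(\neg\neg G\land p_1(\mathbf{t}^1)\to \widehat{p_2}(\mathbf{t}^2))$, $\widetilde\forall(\neg\neg G\land \widehat{p_2}(\mathbf{t}^2)\to p_1(\mathbf{t}^1))$; and for a D-rule $\bigvee_{A\in Pos}A\lor\bigvee_{A\in Neg}\neg A\Leftarrow G$, $\mathrm{tr}_d$ gives $\widetilde\forall\big(\neg\neg G\land\bigwedge_{A\in Pos}(\widehat A\lor\neg\widehat A)\land\bigwedge_{A\in Neg}(A\lor\neg A)\to\bigvee_{A\in Pos}A\lor\bigvee_{A\in Neg}\widehat A\big)$. $\mathrm{tr}[C,L,S,D]$ is the conjunction of $\mathrm{tr}_c[R]$ for $R\in C$, $\mathrm{tr}_l[R]$ for $R\in L$, $\mathrm{tr}_s[R]$ for $R\in S$, $\mathrm{tr}_d[R]$ for $R\in D$, and $CC$. In $\mathrm{SM}_{\mathbf{p}\widehat{\mathbf{p}}}$ the intensional predicates are those of $\mathbf{p}$ and $\widehat{\mathbf{p}}$. *)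

(* deep embedding of first-order syntax,
   with the second-order quantifiers of the definitions of causal theories
   and of SM interpreted directly in Rocq. *)
From mathcomp Require Import all_boot.

Set Implicit Arguments.
Unset Strict Implicit.
Unset Printing Implicit Defensive.

Inductive term (Fn : Type) : Type :=
  | TVar : nat -> term Fn
  | TApp : Fn -> seq (term Fn) -> term Fn.
Arguments TVar {Fn}.

Inductive form (Fn V : Type) : Type :=
  | FTop : form Fn V
  | FBot : form Fn V
  | FAtom : V -> seq (term Fn) -> form Fn V
  | FEq : term Fn -> term Fn -> form Fn V
  | FNeg : form Fn V -> form Fn V
  | FAnd : form Fn V -> form Fn V -> form Fn V
  | FOr : form Fn V -> form Fn V -> form Fn V
  | FImp : form Fn V -> form Fn V -> form Fn V
  | FAll : nat -> form Fn V -> form Fn V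
  | FEx : nat -> form Fn V -> form Fn V.
Arguments FTop {Fn V}.
Arguments FBot {Fn V}.
Arguments FAtom {Fn V}.
Arguments FEq {Fn V}.
Arguments FNeg {Fn V}.
Arguments FAnd {Fn V}.
Arguments FOr {Fn V}.
Arguments FImp {Fn V}.
Arguments FAll {Fn V}.
Arguments FEx {Fn V}.

Section Syntax.
Variable Fn : Type.

Fixpoint tfv (t : term Fn) : seq nat :=
  match t with
  | TVar n => [:: n]
  | TApp _ ts => flatten (map tfv ts)
  end.

Fixpoint ffv V (F : form Fn V) : seq nat :=
  match F with
  | FTop | FBot => [::]
  | FAtom _ ts => flatten (map tfv ts)
  | FEq t1 t2 => tfv t1 ++ tfv t2
  | FNeg A => ffv A
  | FAnd A B | FOr A B | FImp A B => ffv A ++ ffv B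
  | FAll x A | FEx x A => [seq y <- ffv A | y != x]
  end.

Definition ucl V (F : form Fn V) : form Fn V :=
  foldr (fun x A => FAll x A) F (undup (ffv F)).

Fixpoint frename V V' (f : V -> V') (F : form Fn V) : form Fn V' :=
  match F with
  | FTop => FTop
  | FBot => FBot
  | FAtom p ts => FAtom (f p) ts
  | FEq t1 t2 => FEq t1 t2
  | FNeg A => FNeg (frename f A)
  | FAnd A B => FAnd (frename f A) (frename f B)
  | FOr A B => FOr (frename f A) (frename f B)
  | FImp A B => FImp (frename f A) (frename f B)
  | FAll x A => FAll x (frename f A)
  | FEx x A => FEx x (frename f A)
  end.

(* F^diamond(w): occurrences of intensional q (isq q) not in the scope of
   negation are replaced by the predicate variable w_q, represented as inr q;
   all other symbols p are represented as inl p. *)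
Fixpoint fdia V (isq : V -> bool) (F : form Fn V) : form Fn (V + V) :=
  match F with
  | FTop => FTop
  | FBot => FBot
  | FAtom p ts => FAtom (if isq p then inr p else inl p) ts
  | FEq t1 t2 => FEq t1 t2
  | FNeg A => FNeg (frename inl A)
  | FAnd A B => FAnd (fdia isq A) (fdia isq B)
  | FOr A B => FOr (fdia isq A) (fdia isq B)
  | FImp A B => FImp (fdia isq A) (fdia isq B)
  | FAll x A => FAll x (fdia isq A)
  | FEx x A => FEx x (fdia isq A)
  end.

Fixpoint noimp V (F : form Fn V) : bool :=
  match F with
  | FTop | FBot | FAtom _ _ | FEq _ _ => true
  | FNeg A | FAll _ A | FEx _ A => noimp A
  | FAnd A B | FOr A B => noimp A && noimp B
  | FImp _ _ => false
  end.

Fixpoint wf V (ar : V -> nat) (F : form Fn V) : bool :=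
  match F with
  | FTop | FBot | FEq _ _ => true
  | FAtom p ts => size ts == ar p
  | FNeg A | FAll _ A | FEx _ A => wf ar A
  | FAnd A B | FOr A B | FImp A B => wf ar A && wf ar B
  end.

Fixpoint bigand V (l : seq (form Fn V)) : form Fn V :=
  match l with
  | [::] => FTop
  | [:: A] => A
  | A :: l' => FAnd A (bigand l')
  end.

Fixpoint bigor V (l : seq (form Fn V)) : form Fn V :=
  match l with
  | [::] => FBot
  | [:: A] => A
  | A :: l' => FOr A (bigor l')
  end.

End Syntax.

Section Semantics.
Variables (Fn D : Type) (fI : Fn -> seq D -> D).

Definition upd (env : nat -> D) (x : nat) (d : D) : nat -> D :=
  fun n => if n == x then d else env n.

Fixpoint teval (env : nat -> D) (t : term Fn) : D :=
  match t with
  | TVar n => env n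
  | TApp f ts => fI f (map (teval env) ts)
  end.

Fixpoint eval V (I : V -> seq D -> Prop) (env : nat -> D) (F : form Fn V)
  : Prop :=
  match F with
  | FTop => True
  | FBot => False
  | FAtom p ts => I p (map (teval env) ts)
  | FEq t1 t2 => teval env t1 = teval env t2
  | FNeg A => ~ eval I env A
  | FAnd A B => eval I env A /\ eval I env B
  | FOr A B => eval I env A \/ eval I env B
  | FImp A B => eval I env A -> eval I env B
  | FAll x A => forall d : D, eval I (upd env x d) A
  | FEx x A => exists d : D, eval I (upd env x d) A
  end.

Definition sumI V V' (I : V -> seq D -> Prop) (J : V' -> seq D -> Prop)
  : V + V' -> seq D -> Prop :=
  fun v => match v with inl p => I p | inr q => J q end.

Definition ple V (isq : V -> bool) (ar : V -> nat)
  (W I : V -> seq D -> Prop) : Prop :=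
  forall q, isq q -> forall xs : seq D, size xs = ar q -> W q xs -> I q xs.

Definition plt V (isq : V -> bool) (ar : V -> nat)
  (W I : V -> seq D -> Prop) : Prop :=
  ple isq ar W I /\ ~ ple isq ar I W.

Definition SM V (isq : V -> bool) (ar : V -> nat)
  (I : V -> seq D -> Prop) (env : nat -> D) (F : form Fn V) : Prop :=
  eval I env F /\
  ~ exists W : V -> seq D -> Prop,
      plt isq ar W I /\ eval (sumI I W) env (fdia isq F).

End Semantics.

Section Causal.
Variables (Fn : Type) (Pr : eqType).

Record lit := Lit { lsign : bool; lpred : Pr; largs : seq (term Fn) }.

Definition lit_form (l : lit) : form Fn Pr :=
  if lsign l then FAtom (lpred l) (largs l) else FNeg (FAtom (lpred l) (largs l)).

Record rule := Rule { rhead : form Fn Pr; rbody : form Fn Pr }.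

Record crule := CRule { cbody : form Fn Pr }.
Record lrule := LRule { lhead : lit; lbody : form Fn Pr }.
Record srule := SRule { shead1 : lit; shead2 : lit; sbody : form Fn Pr }.
Record drule := DRule { dhead : seq lit; dbody : form Fn Pr }.

Definition iff_form V (A B : form Fn V) : form Fn V := FAnd (FImp A B) (FImp B A).

Definition rule_of_c (r : crule) : rule := Rule FBot (cbody r).
Definition rule_of_l (r : lrule) : rule := Rule (lit_form (lhead r)) (lbody r).
Definition rule_of_s (r : srule) : rule :=
  Rule (iff_form (lit_form (shead1 r)) (lit_form (shead2 r))) (sbody r).
Definition rule_of_d (r : drule) : rule :=
  Rule (bigor (map lit_form (dhead r))) (dbody r).

Definition rules_of (C : seq crule) (L : seq lrule) (S : seq srule)
  (Dr : seq drule) : seq rule :=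
  map rule_of_c C ++ map rule_of_l L ++ map rule_of_s S ++ map rule_of_d Dr.

(* F^p_u : p in pp is replaced by u_p (represented as inr p) *)
Definition usub (pp : seq Pr) (p : Pr) : Pr + Pr :=
  if p \in pp then inr p else inl p.

Definition Tdag (pp : seq Pr) (rs : seq rule) : form Fn (Pr + Pr) :=
  bigand [seq ucl (FImp (frename inl (rbody r)) (frename (usub pp) (rhead r)))
         | r <- rs].

Definition causal_sem (D : Type) (fI : Fn -> seq D -> D) (ar : Pr -> nat)
  (pp : seq Pr) (rs : seq rule) (I : Pr -> seq D -> Prop) (env : nat -> D)
  : Prop :=
  forall U : Pr -> seq D -> Prop,
    eval fI (sumI I U) env (Tdag pp rs) <->
    (forall p, p \in pp -> forall xs : seq D, size xs = ar p ->
       (U p xs <-> I p xs)).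

(* ---- the translation, over the vocabulary Pr + Pr: inl p = p,
        inr p = \hat p ---- *)
Definition hatv (v : Pr + Pr) : Pr := match v with inl p => p | inr p => p end.

Definition latom (l : lit) : form Fn (Pr + Pr) := FAtom (inl (lpred l)) (largs l).
Definition lhat (l : lit) : form Fn (Pr + Pr) := FAtom (inr (lpred l)) (largs l).
Definition tlit (l : lit) : form Fn (Pr + Pr) :=
  if lsign l then latom l else lhat l.

Definition NN (G : form Fn Pr) : form Fn (Pr + Pr) := FNeg (FNeg (frename inl G)).

Definition tr_c (r : crule) : form Fn (Pr + Pr) :=
  ucl (FNeg (frename inl (cbody r))).

Definition tr_l (r : lrule) : form Fn (Pr + Pr) :=
  ucl (FImp (NN (lbody r)) (tlit (lhead r))).

Definition tr_s (r : srule) : form Fn (Pr + Pr) :=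
  let G := NN (sbody r) in
  let l1 := shead1 r in let l2 := shead2 r in
  let imp A B := ucl (FImp (FAnd G A) B) in
  if lsign l1 == lsign l2 then
    bigand [:: imp (latom l1) (latom l2); imp (latom l2) (latom l1);
               imp (lhat l1) (lhat l2); imp (lhat l2) (lhat l1)]
  else
    bigand [:: imp (lhat l1) (latom l2); imp (latom l2) (lhat l1);
               imp (latom l1) (lhat l2); imp (lhat l2) (latom l1)].

Definition tr_d (r : drule) : form Fn (Pr + Pr) :=
  let Pos := [seq l <- dhead r | lsign l] in
  let Neg := [seq l <- dhead r | ~~ lsign l] in
  ucl (FImp (FAnd (NN (dbody r))
                  (FAnd (bigand [seq FOr (lhat l) (FNeg (lhat l)) | l <- Pos])
                        (bigand [seq FOr (latom l) (FNeg (latom l)) | l <- Neg])))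
            (bigor ([seq latom l | l <- Pos] ++ [seq lhat l | l <- Neg]))).

Definition tvars (n : nat) : seq (term Fn) := map TVar (iota 0 n).

Definition CC (ar : Pr -> nat) (pp : seq Pr) : form Fn (Pr + Pr) :=
  bigand (flatten [seq
    [:: ucl (FNeg (FAnd (FAtom (inl p) (tvars (ar p))) (FAtom (inr p) (tvars (ar p)))));
        ucl (FNeg (FAnd (FNeg (FAtom (inl p) (tvars (ar p))))
                        (FNeg (FAtom (inr p) (tvars (ar p))))))]
    | p <- pp]).

Definition tr (ar : Pr -> nat) (pp : seq Pr) (C : seq crule) (L : seq lrule)
  (S : seq srule) (Dr : seq drule) : form Fn (Pr + Pr) :=
  bigand (map tr_c C ++ map tr_l L ++ map tr_s S ++ map tr_d Dr ++ [:: CC ar pp]).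

Definition intens (pp : seq Pr) (v : Pr + Pr) : bool := hatv v \in pp.

End Causal.
Arguments CC {Fn Pr}.
Arguments tvars {Fn}.

(* [CC] makes [\hat p] the complement of [p] on the explainable atoms.  The
   double negations in front of the rule bodies make them insensitive to the
   reduct, so under [CC] the program [tr] says exactly that the interpretation
   [P] of the explainable symbols satisfies [T^dagger(P)].  An interpretation
   [W <= I] of [p, \hat p] keeps some true atoms of [I] and drops the others;
   letting [U] agree with [P] on the kept atoms and disagree on the dropped ones
   is a bijection between such [W] and interpretations [U] of the explainable
   symbols, with [W = I] iff [U = P], and under it [tr^diamond(W)] holds iff
   [T^dagger(U)] does.  So stability of [I] is the uniqueness half of [T]:
   every [U] with [T^dagger(U)] equals [P]. *)

From mathcomp Require Import all_boot.
From Stdlib Require List.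
From Stdlib Require Import Classical Setoid.

Set Implicit Arguments.
Unset Strict Implicit.
Unset Printing Implicit Defensive.

Lemma forall_In_app X (Q : X -> Prop) l1 l2 :
  (forall x, List.In x (l1 ++ l2) -> Q x) <->
  (forall x, List.In x l1 -> Q x) /\ (forall x, List.In x l2 -> Q x).
Proof. by rewrite -!List.Forall_forall List.Forall_app. Qed.

Lemma forall_In_map X Y (f : X -> Y) (Q : Y -> Prop) l :
  (forall y, List.In y (map f l) -> Q y) <-> (forall x, List.In x l -> Q (f x)).
Proof. by rewrite -!List.Forall_forall List.Forall_map. Qed.

Lemma exists_In_map X Y (f : X -> Y) (Q : Y -> Prop) l :
  (exists y, List.In y (map f l) /\ Q y) <-> (exists x, List.In x l /\ Q (f x)).
Proof. by rewrite -!List.Exists_exists List.Exists_map. Qed.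

Lemma In_filter X (a : pred X) x s : List.In x (filter a s) <-> List.In x s /\ a x.
Proof.
elim: s => [|y s IH] /=; first by firstorder.
case ay: (a y); rewrite /= IH; split.
- by case=> [<-|[]]; auto.
- by case=> -[<-|]; auto.
- by case; auto.
- by case=> -[<-|]; [rewrite ay|auto].
Qed.

Lemma forall_In_iff X (A B : X -> Prop) s :
  (forall x, List.In x s -> (A x <-> B x)) ->
  (forall x, List.In x s -> A x) <-> (forall x, List.In x s -> B x).
Proof. by move=> AB; split=> H x Hx; apply/(AB x Hx)/H. Qed.

Lemma exists_In_iff X (A B : X -> Prop) s :
  (forall x, List.In x s -> (A x <-> B x)) ->
  (exists x, List.In x s /\ A x) <-> (exists x, List.In x s /\ B x).
Proof. by move=> AB; split=> -[x [Hx H]]; exists x; split=> //; apply/(AB x Hx). Qed.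

Lemma forall_In_filter_map X Y (a : pred X) (g1 g2 : X -> Y) (Q : Y -> Prop) s :
  (forall y, List.In y (map g1 (filter a s)) -> Q y) /\
  (forall y, List.In y (map g2 (filter (fun x => ~~ a x) s)) -> Q y) <->
  forall x, List.In x s -> Q (if a x then g1 x else g2 x).
Proof.
rewrite !forall_In_map; split=> [[H1 H2] x Hx | H].
  by case ax: (a x); [apply: H1 | apply: H2]; apply/In_filter; rewrite ?ax.
by split=> x /In_filter[Hx ax]; move: (H x Hx); rewrite ?ax ?(negbTE ax).
Qed.

Lemma exists_In_filter_map X Y (a : pred X) (g1 g2 : X -> Y) (Q : Y -> Prop) s :
  (exists y, List.In y (map g1 (filter a s) ++ map g2 (filter (fun x => ~~ a x) s))
     /\ Q y) <->
  exists x, List.In x s /\ Q (if a x then g1 x else g2 x).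
Proof.
split=> [[y [/List.in_app_iff [] /List.in_map_iff [x [<- /In_filter [Hx ax]]] Hy]]
        | [x [Hx Hy]]].
- by exists x; rewrite ax.
- by exists x; rewrite (negbTE ax).
case ax: (a x) Hy => Hy; exists (if a x then g1 x else g2 x);
  rewrite ax List.in_app_iff; split=> //; [left | right]; apply: List.in_map;
  by apply/In_filter; rewrite ?ax.
Qed.

Section Semantics.
Variables (Fn D : Type) (fI : Fn -> seq D -> D).

Fixpoint teval_eq_on (t : term Fn) (e1 e2 : nat -> D) {struct t} :
  {in tfv t, e1 =1 e2} -> teval fI e1 t = teval fI e2 t.
Proof.
case: t => [n|f ts] /= E; first by apply: E; rewrite inE.
congr (fI f _); elim: ts E => //= t ts IHts E.
congr (_ :: _); [apply: teval_eq_on | apply: IHts] => n Hn; apply: E;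
  by rewrite mem_cat Hn ?orbT.
Qed.

Lemma map_teval_eq_on (ts : seq (term Fn)) (e1 e2 : nat -> D) :
  {in flatten (map (@tfv Fn) ts), e1 =1 e2} ->
  map (teval fI e1) ts = map (teval fI e2) ts.
Proof.
elim: ts => //= t ts IHts E; congr (_ :: _);
  [apply: teval_eq_on | apply: IHts] => n Hn; apply: E; by rewrite mem_cat Hn ?orbT.
Qed.

Lemma eval_eq_on V (I : V -> seq D -> Prop) (F : form Fn V) e1 e2 :
  {in ffv F, e1 =1 e2} -> (eval fI I e1 F <-> eval fI I e2 F).
Proof.
elim: F e1 e2 => [| | p ts | t1 t2 | A IA | A IA B IB | A IA B IB | A IA B IB
  | x A IA | x A IA] e1 e2 /= E; try done.
- by rewrite (map_teval_eq_on E).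
- by rewrite (@teval_eq_on t1 e1 e2) ?(@teval_eq_on t2 e1 e2) // => n Hn;
    apply: E; rewrite mem_cat Hn ?orbT.
- by rewrite (IA e1 e2 E).
- by rewrite (IA e1 e2) ?(IB e1 e2) // => n Hn; apply: E; rewrite mem_cat Hn ?orbT.
- by rewrite (IA e1 e2) ?(IB e1 e2) // => n Hn; apply: E; rewrite mem_cat Hn ?orbT.
- by rewrite (IA e1 e2) ?(IB e1 e2) // => n Hn; apply: E; rewrite mem_cat Hn ?orbT.
- have Ed d : {in ffv A, upd e1 x d =1 upd e2 x d}.
    by move=> n Hn; rewrite /upd; case: eqP => // /eqP nx; apply: E; rewrite mem_filter nx.
  by split=> H d; apply/(IA _ _ (Ed d)).
- have Ed d : {in ffv A, upd e1 x d =1 upd e2 x d}.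
    by move=> n Hn; rewrite /upd; case: eqP => // /eqP nx; apply: E; rewrite mem_filter nx.
  by split=> -[d H]; exists d; apply/(IA _ _ (Ed d)).
Qed.

Lemma eval_ucl V (I : V -> seq D -> Prop) (F : form Fn V) e :
  eval fI I e (ucl F) <-> forall e', eval fI I e' F.
Proof.
have closure xs e0 : eval fI I e0 (foldr (fun x A => FAll x A) F xs) <->
    forall e', (forall n, n \notin xs -> e' n = e0 n) -> eval fI I e' F.
  elim: xs e0 => [|x xs IH] e0 /=.
    by split=> [H e' E|]; [apply/(@eval_eq_on _ _ _ e' e0) => // n _; apply: E | apply].
  split=> [H e' E | H d].
    apply: (proj1 (IH (upd e0 x (e' x))) (H (e' x))) => n Hn; rewrite /upd.
    by case: eqP => [->|/eqP nx] //; apply: E; rewrite inE negb_or nx.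
  apply/IH => e' E; apply: H => n; rewrite inE negb_or => /andP[nx nxs].
  by rewrite E // /upd (negbTE nx).
rewrite /ucl closure; split=> [H e'|H e' _]; last exact: H.
pose e'' n := if n \in ffv F then e' n else e n.
apply/(@eval_eq_on _ _ _ e' e'') => [n Hn|]; first by rewrite /e'' Hn.
by apply: H => n; rewrite mem_undup /e'' => /negbTE ->.
Qed.

Lemma eval_frename V V' (f : V -> V') (I : V' -> seq D -> Prop) (F : form Fn V) e :
  eval fI I e (frename f F) <-> eval fI (fun v => I (f v)) e F.
Proof.
elim: F e => [| | p ts | t1 t2 | A IA | A IA B IB | A IA B IB | A IA B IB
  | x A IA | x A IA] e //=; rewrite ?IA ?IB //.
- by split=> H d; apply/IA.
- by split=> -[d H]; exists d; apply/IA.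
Qed.

Lemma eval_bigand V (I : V -> seq D -> Prop) (l : seq (form Fn V)) e :
  eval fI I e (bigand l) <-> forall A, List.In A l -> eval fI I e A.
Proof.
elim: l => [|A [|B l] IH] /=; first by [].
  by split=> [H X [<-|[]]|H] //; apply: H; left.
by rewrite IH; split=> [[HA HB] X [<-|]|H]; auto.
Qed.

Lemma eval_bigor V (I : V -> seq D -> Prop) (l : seq (form Fn V)) e :
  eval fI I e (bigor l) <-> exists A, List.In A l /\ eval fI I e A.
Proof.
elim: l => [|A [|B l] IH] /=; first by firstorder.
  by split=> [H|[X [[<-|[]] H]]] //; exists A; auto.
by rewrite IH; split=> [[HA|[X [HX H]]]|[X [[<-|HX] H]]]; eauto.
Qed.

End Semantics.

Section Diamond.
Variables (Fn D : Type) (fI : Fn -> seq D -> D) (V : Type) (isq : V -> bool).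

Lemma ffv_frename V' (f : V -> V') (F : form Fn V) : ffv (frename f F) = ffv F.
Proof.
by elim: F => [| | p ts | t1 t2 | A IA | A IA B IB | A IA B IB | A IA B IB
  | x A IA | x A IA] //=; rewrite ?IA ?IB.
Qed.

Lemma ffv_fdia (F : form Fn V) : ffv (fdia isq F) = ffv F.
Proof.
by elim: F => [| | p ts | t1 t2 | A IA | A IA B IB | A IA B IB | A IA B IB
  | x A IA | x A IA] //=; rewrite ?ffv_frename ?IA ?IB.
Qed.

Lemma fdia_ucl (F : form Fn V) : fdia isq (ucl F) = ucl (fdia isq F).
Proof. by rewrite /ucl ffv_fdia; elim: (undup _) => //= x xs ->. Qed.

Lemma fdia_bigand (l : seq (form Fn V)) :
  fdia isq (bigand l) = bigand (map (fdia isq) l).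
Proof. by elim: l => //= A [|B l] //= ->. Qed.

Lemma fdia_bigor (l : seq (form Fn V)) :
  fdia isq (bigor l) = bigor (map (fdia isq) l).
Proof. by elim: l => //= A [|B l] //= ->. Qed.

Lemma eval_fdia_same (I : V -> seq D -> Prop) (F : form Fn V) e :
  eval fI (sumI I I) e (fdia isq F) <-> eval fI I e F.
Proof.
elim: F e => [| | p ts | t1 t2 | A IA | A IA B IB | A IA B IB | A IA B IB
  | x A IA | x A IA] e /=; rewrite ?eval_frename ?IA ?IB //.
- by case: isq.
- by split=> H d; apply/IA.
- by split=> -[d H]; exists d; apply/IA.
Qed.

Fixpoint atoms_negated (F : form Fn V) : bool :=
  match F with
  | FTop | FBot | FEq _ _ | FNeg _ => true
  | FAtom _ _ => false
  | FAnd A B | FOr A B | FImp A B => atoms_negated A && atoms_negated B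
  | FAll _ A | FEx _ A => atoms_negated A
  end.

Lemma atoms_negated_ucl (F : form Fn V) : atoms_negated (ucl F) = atoms_negated F.
Proof. by rewrite /ucl; elim: (undup _). Qed.

Lemma atoms_negated_bigand (l : seq (form Fn V)) :
  (forall A, List.In A l -> atoms_negated A) -> atoms_negated (bigand l).
Proof.
elim: l => //= A [|B l] IH H; first by apply: H; left.
by rewrite /= H /=; [apply: IH => X HX; apply: H; right | left].
Qed.

Lemma eval_fdia_atoms_negated (I W : V -> seq D -> Prop) (F : form Fn V) e :
  atoms_negated F -> eval fI (sumI I W) e (fdia isq F) <-> eval fI I e F.
Proof.
elim: F e => [| | p ts | t1 t2 | A IA | A IA B IB | A IA B IB | A IA B IB
  | x A IA | x A IA] e //=; rewrite ?eval_frename //.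
- by case/andP=> /IA-> /IB->.
- by case/andP=> /IA-> /IB->.
- by case/andP=> /IA-> /IB->.
- by move=> HA; split=> H d; apply/IA.
- by move=> HA; split=> -[d H]; exists d; apply/IA.
Qed.

End Diamond.

Lemma wf_bigor Fn V (ar : V -> nat) (l : seq (form Fn V)) :
  wf ar (bigor l) -> forall A, List.In A l -> wf ar A.
Proof.
elim: l => //= A [|B l] IH H X; first by case=> [<-|[]].
by case/andP: H => HA HB [<-|HX] //; apply: IH HB X HX.
Qed.

Section Translation.
Variables (Fn : Type) (Pr : eqType) (ar : Pr -> nat) (pp : seq Pr).
Variables (D : Type) (fI : Fn -> seq D -> D).

Local Notation lit := (lit Fn Pr).
Local Notation pos I := (fun p => I (inl p)).
Local Notation le W I := (ple (intens pp) (fun v => ar (hatv v)) W I).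
Local Notation eval_dia I W e F := (eval fI (sumI I W) e (fdia (intens pp) F)).

Definition lit_ok (l : lit) : bool :=
  (lpred l \in pp) && (size (largs l) == ar (lpred l)).

Lemma wf_lit_ok l : lpred l \in pp -> wf ar (lit_form l) -> lit_ok l.
Proof. by rewrite /lit_ok /lit_form => ->; case: lsign. Qed.

Definition lit_args e (l : lit) : seq D := map (teval fI e) (largs l).

Definition lit_holds (U : Pr -> seq D -> Prop) e (l : lit) : Prop :=
  if lsign l then U (lpred l) (lit_args e l) else ~ U (lpred l) (lit_args e l).

Definition eq_on_expl (U V : Pr -> seq D -> Prop) : Prop :=
  forall p, p \in pp -> forall xs : seq D, size xs = ar p -> (U p xs <-> V p xs).

Lemma lit_holds_eq_on U V e l :
  eq_on_expl U V -> lit_ok l -> lit_holds U e l <-> lit_holds V e l.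
Proof.
move=> UV /andP[Hp /eqP Hs].
by rewrite /lit_holds; case: lsign; rewrite (UV _ Hp) // /lit_args size_map.
Qed.

Lemma eval_lit_form_usub P U e l : lpred l \in pp ->
  eval fI (fun p => sumI P U (usub pp p)) e (lit_form l) <-> lit_holds U e l.
Proof. by rewrite /lit_form /lit_holds /usub => Hp; case: lsign; rewrite /= Hp. Qed.

(* [tlit l] is an atom of [tsym l] ([p] for [p(t)], [\hat p] for [~p(t)]);
   [csym l] is the other symbol of the pair. *)
Definition tsym (l : lit) : Pr + Pr := if lsign l then inl (lpred l) else inr (lpred l).
Definition csym (l : lit) : Pr + Pr := if lsign l then inr (lpred l) else inl (lpred l).

Definition hat_complement (I : Pr + Pr -> seq D -> Prop) : Prop :=
  forall p, p \in pp -> forall xs : seq D, size xs = ar p ->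
    (I (inr p) xs <-> ~ I (inl p) xs).

Lemma atoms_negated_CC : atoms_negated (CC ar pp : form Fn (Pr + Pr)).
Proof.
apply: atoms_negated_bigand; elim: pp => //= p s IH A.
by case=> [<-|[<-|/IH]]; rewrite ?atoms_negated_ucl.
Qed.

Lemma eval_CC_complement I e : eval fI I e (CC ar pp) -> hat_complement I.
Proof.
rewrite /CC eval_bigand => H p Hp xs Hs.
pose e' n := nth (e 0) xs n.
have Exs : map (teval fI e') (tvars (ar p)) = xs.
  by rewrite /tvars -map_comp -Hs -/(mkseq _ _) mkseq_nth.
elim: pp Hp H => // q s IH; rewrite inE => /orP[/eqP <- | Hp] H /=; last first.
  by apply: IH => // A HA; apply: H; do 2 right.
move: (H _ (or_introl erefl)) (H _ (or_intror (or_introl erefl))).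
rewrite !eval_ucl => /(_ e') /= + /(_ e') /=; rewrite Exs => H1 H2.
by split; [tauto | move=> nI; apply: NNPP; tauto].
Qed.

Lemma complement_tsym I e l : hat_complement I -> lit_ok l ->
  I (tsym l) (lit_args e l) <-> lit_holds (pos I) e l.
Proof.
move=> HI /andP[Hp /eqP Hs]; have := HI _ Hp (lit_args e l).
by rewrite /tsym /lit_holds /lit_args size_map Hs; case: lsign => // /(_ erefl).
Qed.

Lemma complement_csym I e l : hat_complement I -> lit_ok l ->
  I (csym l) (lit_args e l) <-> ~ lit_holds (pos I) e l.
Proof.
move=> HI /andP[Hp /eqP Hs]; have := HI _ Hp (lit_args e l).
rewrite /csym /lit_holds /lit_args size_map Hs; case: lsign => /(_ erefl) // _.
by split=> [x /(_ x)|/NNPP].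
Qed.

(* [W] keeps a true atom [p(xs)] or [\hat p(xs)] of [I] exactly when [U] agrees
   with [I] on [p(xs)]. *)
Definition selection (I : Pr + Pr -> seq D -> Prop) (U : Pr -> seq D -> Prop)
    (W : Pr + Pr -> seq D -> Prop) : Prop :=
  forall p, p \in pp -> forall xs : seq D, size xs = ar p ->
    (W (inl p) xs <-> I (inl p) xs /\ U p xs) /\
    (W (inr p) xs <-> I (inr p) xs /\ ~ U p xs).

Lemma selection_tsym I U W e l : hat_complement I -> selection I U W -> lit_ok l ->
  W (tsym l) (lit_args e l) <-> lit_holds (pos I) e l /\ lit_holds U e l.
Proof.
move=> HI HW Hl; rewrite -(complement_tsym e HI Hl).
case/andP: Hl => Hp /eqP Hs; have := HW _ Hp (lit_args e l).
by rewrite /tsym /lit_holds /lit_args size_map Hs; case: lsign; move=> /(_ erefl) [Wl Wr].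
Qed.

Lemma selection_csym I U W e l : hat_complement I -> selection I U W -> lit_ok l ->
  W (csym l) (lit_args e l) <-> ~ lit_holds (pos I) e l /\ ~ lit_holds U e l.
Proof.
move=> HI HW Hl; rewrite -(complement_csym e HI Hl).
case/andP: Hl => Hp /eqP Hs; have := HW _ Hp (lit_args e l).
rewrite /csym /lit_holds /lit_args size_map Hs; case: lsign; move=> /(_ erefl) [Wl Wr] //.
by rewrite Wl; split=> -[x y]; split=> //; apply: NNPP.
Qed.

Lemma selection_exists I U : exists W, selection I U W.
Proof.
exists (fun v xs => match v with
                    | inl p => I (inl p) xs /\ U p xs
                    | inr p => I (inr p) xs /\ ~ U p xs end).
by [].
Qed.

Lemma selection_le I U W : selection I U W -> le W I.
Proof.
by move=> HW [] p Hp xs Hs; have [[Wl _] [Wr _]] := HW p Hp xs Hs;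
  [move/Wl=> [] | move/Wr=> []].
Qed.

Lemma le_selection I W : hat_complement I -> le W I -> exists U, selection I U W.
Proof.
move=> HI WI.
exists (fun p xs => I (inl p) xs /\ W (inl p) xs \/ ~ I (inl p) xs /\ ~ W (inr p) xs).
move=> p Hp xs Hs; have := HI p Hp xs Hs.
have /= Wl := WI (inl p) Hp xs Hs; have /= Wr := WI (inr p) Hp xs Hs.
by split; split; try tauto; case=> _ HU; apply: NNPP; tauto.
Qed.

Lemma selection_ge I U W : hat_complement I -> selection I U W ->
  le I W <-> eq_on_expl U (pos I).
Proof.
move=> HI HW; split=> [IW p Hp xs Hs | UI [] p Hp xs Hs];
  have := HI p Hp xs Hs; have [Wl Wr] := HW p Hp xs Hs.
- move: (IW (inl p) Hp xs Hs) (IW (inr p) Hp xs Hs) => /= IWl IWr.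
  by split=> [HU|]; [apply: NNPP|]; tauto.
- by move: (UI p Hp xs Hs); tauto.
- by move: (UI p Hp xs Hs); tauto.
Qed.

Definition crule_sat (P : Pr -> seq D -> Prop) (r : crule Fn Pr) : Prop :=
  forall e, ~ eval fI P e (cbody r).

Definition lrule_sat (P U : Pr -> seq D -> Prop) (r : lrule Fn Pr) : Prop :=
  forall e, eval fI P e (lbody r) -> lit_holds U e (lhead r).

Definition srule_sat (P U : Pr -> seq D -> Prop) (r : srule Fn Pr) : Prop :=
  forall e, eval fI P e (sbody r) -> (lit_holds U e (shead1 r) <-> lit_holds U e (shead2 r)).

Definition drule_sat (P U : Pr -> seq D -> Prop) (r : drule Fn Pr) : Prop :=
  forall e, eval fI P e (dbody r) -> exists l, List.In l (dhead r) /\ lit_holds U e l.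

Lemma eval_dia_ucl I W e F : eval_dia I W e (ucl F) <-> forall e', eval_dia I W e' F.
Proof. by rewrite fdia_ucl eval_ucl. Qed.

Lemma eval_dia_imp I W e A B :
  eval_dia I W e (FImp A B) <-> (eval_dia I W e A -> eval_dia I W e B).
Proof. by []. Qed.

Lemma eval_dia_and I W e A B :
  eval_dia I W e (FAnd A B) <-> eval_dia I W e A /\ eval_dia I W e B.
Proof. by []. Qed.

Lemma eval_dia_NN I W e G : eval_dia I W e (NN G) <-> eval fI (pos I) e G.
Proof.
by rewrite eval_fdia_atoms_negated //= eval_frename; split; [exact: NNPP | tauto].
Qed.

Lemma eval_dia_latom I W e l : lpred l \in pp ->
  eval_dia I W e (latom l) <-> W (inl (lpred l)) (lit_args e l).
Proof. by rewrite /= /intens /= => ->. Qed.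

Lemma eval_dia_lhat I W e l : lpred l \in pp ->
  eval_dia I W e (lhat l) <-> W (inr (lpred l)) (lit_args e l).
Proof. by rewrite /= /intens /= => ->. Qed.

Lemma eval_dia_tr_c I W e r : eval_dia I W e (tr_c r) <-> crule_sat (pos I) r.
Proof.
rewrite eval_fdia_atoms_negated ?atoms_negated_ucl // eval_ucl /=.
by setoid_rewrite eval_frename.
Qed.

Lemma eval_dia_tr_l I W e r : lpred (lhead r) \in pp ->
  eval_dia I W e (tr_l r) <->
  forall e', eval fI (pos I) e' (lbody r) -> W (tsym (lhead r)) (lit_args e' (lhead r)).
Proof.
move=> Hp; rewrite /tr_l eval_dia_ucl; apply: Morphisms_Prop.all_iff_morphism => e'.
rewrite eval_dia_imp eval_dia_NN /tlit /tsym.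
by case: lsign; rewrite ?eval_dia_latom ?eval_dia_lhat.
Qed.

Lemma eval_dia_tr_s I W e r : lpred (shead1 r) \in pp -> lpred (shead2 r) \in pp ->
  eval_dia I W e (tr_s r) <->
  forall e', eval fI (pos I) e' (sbody r) ->
    (W (tsym (shead1 r)) (lit_args e' (shead1 r)) <->
     W (tsym (shead2 r)) (lit_args e' (shead2 r))) /\
    (W (csym (shead1 r)) (lit_args e' (shead1 r)) <->
     W (csym (shead2 r)) (lit_args e' (shead2 r))).
Proof.
move=> H1 H2; rewrite /tr_s /tsym /csym.
case: (lsign (shead1 r)); case: (lsign (shead2 r)); rewrite /= !eval_dia_ucl;
setoid_rewrite eval_dia_imp; setoid_rewrite eval_dia_and; setoid_rewrite eval_dia_NN;
setoid_rewrite (eval_dia_latom _ _ _ H1); setoid_rewrite (eval_dia_latom _ _ _ H2);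
setoid_rewrite (eval_dia_lhat _ _ _ H1); setoid_rewrite (eval_dia_lhat _ _ _ H2);
firstorder.
Qed.

Lemma eval_dia_tr_d I W e r : (forall l, List.In l (dhead r) -> lpred l \in pp) ->
  eval_dia I W e (tr_d r) <->
  forall e', eval fI (pos I) e' (dbody r) ->
    (forall l, List.In l (dhead r) ->
       W (csym l) (lit_args e' l) \/ ~ I (csym l) (lit_args e' l)) ->
    exists l, List.In l (dhead r) /\ W (tsym l) (lit_args e' l).
Proof.
move=> Hpp; rewrite /tr_d eval_dia_ucl; apply: Morphisms_Prop.all_iff_morphism => e'.
rewrite eval_dia_imp !eval_dia_and eval_dia_NN !fdia_bigand fdia_bigor !eval_bigand
  eval_bigor map_cat -!map_comp forall_In_filter_map exists_In_filter_map.
rewrite (forall_In_iff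
  (B := fun l => W (csym l) (lit_args e' l) \/ ~ I (csym l) (lit_args e' l))).
  rewrite (exists_In_iff (B := fun l => W (tsym l) (lit_args e' l))); first tauto.
  by move=> l /Hpp; rewrite /tsym /= /intens; case: lsign => /= ->.
by move=> l /Hpp; rewrite /csym /= /intens; case: lsign => /= ->.
Qed.

Lemma eval_tr_c I e r : eval fI I e (tr_c r) <-> crule_sat (pos I) r.
Proof. by rewrite -(eval_fdia_same fI (intens pp)) eval_dia_tr_c. Qed.

Lemma eval_tr_l I e r : hat_complement I -> lit_ok (lhead r) ->
  eval fI I e (tr_l r) <-> lrule_sat (pos I) (pos I) r.
Proof.
move=> HI Hl; rewrite -(eval_fdia_same fI (intens pp)) eval_dia_tr_l; last by case/andP: Hl.
by setoid_rewrite (fun e => complement_tsym e HI Hl).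
Qed.

Lemma eval_tr_s I e r : hat_complement I -> lit_ok (shead1 r) -> lit_ok (shead2 r) ->
  eval fI I e (tr_s r) <-> srule_sat (pos I) (pos I) r.
Proof.
move=> HI H1 H2; rewrite -(eval_fdia_same fI (intens pp)) eval_dia_tr_s;
  last (by case/andP: H2); last by case/andP: H1.
setoid_rewrite (fun e => complement_tsym e HI H1).
setoid_rewrite (fun e => complement_tsym e HI H2).
setoid_rewrite (fun e => complement_csym e HI H1).
setoid_rewrite (fun e => complement_csym e HI H2).
by split=> H e' /H; tauto.
Qed.

Lemma eval_tr_d I e r : hat_complement I ->
  (forall l, List.In l (dhead r) -> lit_ok l) ->
  eval fI I e (tr_d r) <-> drule_sat (pos I) (pos I) r.
Proof.
move=> HI Hok; rewrite -(eval_fdia_same fI (intens pp)) eval_dia_tr_d;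
  last by move=> l /Hok /andP[].
apply: Morphisms_Prop.all_iff_morphism => e'.
rewrite (exists_In_iff (B := lit_holds (pos I) e')); last first.
  by move=> l /Hok; apply: complement_tsym.
by split=> H /H; [apply=> l _; exact: classic | move=> ? _].
Qed.

Lemma eval_dia_tr_l_selection I U W e r : hat_complement I -> selection I U W ->
  lit_ok (lhead r) -> lrule_sat (pos I) (pos I) r ->
  eval_dia I W e (tr_l r) <-> lrule_sat (pos I) U r.
Proof.
move=> HI HW Hl HP; rewrite eval_dia_tr_l; last by case/andP: Hl.
setoid_rewrite (fun e => selection_tsym e HI HW Hl).
by split=> H e' He'; [case: (H e' He') | split; [apply: HP | apply: H]].
Qed.

Lemma eval_dia_tr_s_selection I U W e r : hat_complement I -> selection I U W ->
  lit_ok (shead1 r) -> lit_ok (shead2 r) -> srule_sat (pos I) (pos I) r ->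
  eval_dia I W e (tr_s r) <-> srule_sat (pos I) U r.
Proof.
move=> HI HW H1 H2 HP; rewrite eval_dia_tr_s; last (by case/andP: H2); last by case/andP: H1.
setoid_rewrite (fun e => selection_tsym e HI HW H1).
setoid_rewrite (fun e => selection_tsym e HI HW H2).
setoid_rewrite (fun e => selection_csym e HI HW H1).
setoid_rewrite (fun e => selection_csym e HI HW H2).
split=> H e' He'; move: (HP e' He') (H e' He');
  case: (classic (lit_holds (pos I) e' (shead1 r))); tauto.
Qed.

Lemma eval_dia_tr_d_selection I U W e r : hat_complement I -> selection I U W ->
  (forall l, List.In l (dhead r) -> lit_ok l) ->
  eval_dia I W e (tr_d r) <-> drule_sat (pos I) U r.
Proof.
move=> HI HW Hok; rewrite eval_dia_tr_d; last by move=> l /Hok /andP[].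
apply: Morphisms_Prop.all_iff_morphism => e'.
rewrite (forall_In_iff (B := fun l => lit_holds U e' l -> lit_holds (pos I) e' l)); last first.
  move=> l /Hok Hl; rewrite (selection_csym e' HI HW Hl) (complement_csym e' HI Hl).
  by case: (classic (lit_holds (pos I) e' l)); tauto.
rewrite (exists_In_iff (B := fun l => lit_holds (pos I) e' l /\ lit_holds U e' l)); last first.
  by move=> l /Hok Hl; apply: selection_tsym.
split=> H /H {}H.
- apply: NNPP => nU.
  (* With no head literal true in [U], the premise of [tr_d] holds vacuously. *)
  have [l [Hl [_ Ul]]] :
      exists l, List.In l (dhead r) /\ lit_holds (pos I) e' l /\ lit_holds U e' l.
    by apply: H => l Hl Ul; case: nU; exists l.
  by apply: nU; exists l.
- by move=> Hprem; case: H => l [Hl Ul]; exists l; split=> //; split=> //; apply: Hprem.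
Qed.

Variables (C : seq (crule Fn Pr)) (L : seq (lrule Fn Pr)).
Variables (S : seq (srule Fn Pr)) (Dr : seq (drule Fn Pr)).
Hypothesis okL : forall r, List.In r L -> lit_ok (lhead r).
Hypothesis okS : forall r, List.In r S -> lit_ok (shead1 r) /\ lit_ok (shead2 r).
Hypothesis okD : forall r, List.In r Dr -> forall l, List.In l (dhead r) -> lit_ok l.

Definition rules_sat (P U : Pr -> seq D -> Prop) : Prop :=
  [/\ forall r, List.In r C -> crule_sat P r,
      forall r, List.In r L -> lrule_sat P U r,
      forall r, List.In r S -> srule_sat P U r &
      forall r, List.In r Dr -> drule_sat P U r].

Lemma eval_Tdag P U e :
  eval fI (sumI P U) e (Tdag pp (rules_of C L S Dr)) <-> rules_sat P U.
Proof.
rewrite /Tdag eval_bigand forall_In_map /rules_of !forall_In_app !forall_In_map.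
setoid_rewrite eval_ucl => /=; setoid_rewrite eval_frename.
rewrite (forall_In_iff (B := lrule_sat P U)); last first.
  move=> r /okL /andP[Hp _]; rewrite /lrule_sat.
  by setoid_rewrite (fun e => eval_lit_form_usub P U e Hp).
rewrite (forall_In_iff (B := srule_sat P U)); last first.
  move=> r /okS [/andP[Hp1 _] /andP[Hp2 _]]; rewrite /srule_sat /=.
  setoid_rewrite (fun e => eval_lit_form_usub P U e Hp1).
  by setoid_rewrite (fun e => eval_lit_form_usub P U e Hp2).
rewrite (forall_In_iff (B := drule_sat P U)); last first.
  move=> r /okD Hok; rewrite /drule_sat /=; setoid_rewrite eval_bigor.
  setoid_rewrite exists_In_map; apply: Morphisms_Prop.all_iff_morphism => e'.
  rewrite (exists_In_iff (B := lit_holds U e')) //.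
  by move=> l /Hok /andP[Hp _]; apply: eval_lit_form_usub.
by split=> [[? [? [? ?]]]|[]].
Qed.

Lemma rules_sat_eq_on P U V : eq_on_expl U V -> rules_sat P U -> rules_sat P V.
Proof.
move=> UV [HC HL HS HD]; split=> // r Hr e /[dup] Hb.
- by move/(HL r Hr); rewrite (lit_holds_eq_on e UV (okL Hr)).
- have [ok1 ok2] := okS Hr.
  by move/(HS r Hr); rewrite (lit_holds_eq_on e UV ok1) (lit_holds_eq_on e UV ok2).
- move/(HD r Hr) => [l [Hl Hu]]; exists l; split=> //.
  by rewrite -(lit_holds_eq_on e UV (okD Hr Hl)).
Qed.

Lemma causal_sem_iff P e :
  causal_sem fI ar pp (rules_of C L S Dr) P e <->
  rules_sat P P /\ forall U, rules_sat P U -> eq_on_expl U P.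
Proof.
rewrite /causal_sem; setoid_rewrite eval_Tdag.
split=> [H | [HP Hmin] U]; first by split=> [|U /H //]; apply/H.
split=> [|UP]; first exact: Hmin.
by apply: rules_sat_eq_on HP => p Hp xs Hs; rewrite UP.
Qed.

Lemma eval_fdia_tr J e :
  eval fI J e (fdia (intens pp) (tr ar pp C L S Dr)) <->
  (forall r, List.In r C -> eval fI J e (fdia (intens pp) (tr_c r))) /\
  (forall r, List.In r L -> eval fI J e (fdia (intens pp) (tr_l r))) /\
  (forall r, List.In r S -> eval fI J e (fdia (intens pp) (tr_s r))) /\
  (forall r, List.In r Dr -> eval fI J e (fdia (intens pp) (tr_d r))) /\
  eval fI J e (fdia (intens pp) (CC ar pp)).
Proof.
rewrite /tr fdia_bigand eval_bigand forall_In_map !forall_In_app !forall_In_map.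
by split=> [[? [? [? [? HCC]]]]|[? [? [? [? ?]]]]];
  [do !split=> //; apply: HCC; left | do !split=> //; move=> A [<-|[]]].
Qed.

Lemma eval_tr_rules I e : hat_complement I ->
  (forall r, List.In r C -> eval fI I e (tr_c r)) /\
  (forall r, List.In r L -> eval fI I e (tr_l r)) /\
  (forall r, List.In r S -> eval fI I e (tr_s r)) /\
  (forall r, List.In r Dr -> eval fI I e (tr_d r)) <->
  rules_sat (pos I) (pos I).
Proof.
move=> HI.
rewrite (forall_In_iff (B := crule_sat (pos I))); last by move=> r _; apply: eval_tr_c.
rewrite (forall_In_iff (B := lrule_sat (pos I) (pos I))); last first.
  by move=> r /okL; apply: eval_tr_l.
rewrite (forall_In_iff (B := srule_sat (pos I) (pos I))); last first.
  by move=> r /okS [ok1 ok2]; apply: eval_tr_s.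
rewrite (forall_In_iff (B := drule_sat (pos I) (pos I))); last first.
  by move=> r /okD; apply: eval_tr_d.
by split=> [[? [? [? ?]]]|[]].
Qed.

Lemma eval_tr I e :
  eval fI I e (tr ar pp C L S Dr) <-> rules_sat (pos I) (pos I) /\ eval fI I e (CC ar pp).
Proof.
rewrite -(eval_fdia_same fI (intens pp)) eval_fdia_tr; setoid_rewrite eval_fdia_same.
split=> [[HC [HL [HS [HD HCC]]]] | [HP HCC]]; have HI := eval_CC_complement HCC.
  by split=> //; apply/(eval_tr_rules e HI).
by have [? [? [? ?]]] := proj2 (eval_tr_rules e HI) HP.
Qed.

Lemma eval_dia_tr_selection I U W e :
  eval fI I e (CC ar pp) -> rules_sat (pos I) (pos I) -> selection I U W ->
  eval_dia I W e (tr ar pp C L S Dr) <-> rules_sat (pos I) U.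
Proof.
move=> HCC [PC PL PS PD] HW; have HI := eval_CC_complement HCC.
rewrite eval_fdia_tr (eval_fdia_atoms_negated _ _ _ _ _ atoms_negated_CC).
rewrite (forall_In_iff (B := crule_sat (pos I))); last by move=> r _; apply: eval_dia_tr_c.
rewrite (forall_In_iff (B := lrule_sat (pos I) U)); last first.
  by move=> r Hr; apply: eval_dia_tr_l_selection HI HW (okL Hr) (PL r Hr).
rewrite (forall_In_iff (B := srule_sat (pos I) U)); last first.
  by move=> r Hr; have [ok1 ok2] := okS Hr; apply: eval_dia_tr_s_selection (PS r Hr).
rewrite (forall_In_iff (B := drule_sat (pos I) U)); last first.
  by move=> r Hr; apply: eval_dia_tr_d_selection HI HW (okD Hr).
by split=> [[? [? [? [? _]]]]|[]].
Qed.

Lemma SM_tr I e :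
  SM fI (intens pp) (fun v => ar (hatv v)) I e (tr ar pp C L S Dr) <->
  causal_sem fI ar pp (rules_of C L S Dr) (pos I) e /\ eval fI I e (CC ar pp).
Proof.
rewrite /SM eval_tr causal_sem_iff.
split=> [[[HP HCC] Hmin] | [[HP Hmax] HCC]]; have HI := eval_CC_complement HCC.
- split=> //; split=> // U HU; have [W HW] := selection_exists I U.
  rewrite -(selection_ge HI HW); apply: NNPP => nIW; apply: Hmin.
  exists W; split; first by split=> //; exact: selection_le HW.
  by rewrite (eval_dia_tr_selection HCC HP HW).
- split=> // -[W [[WI nIW] HW]]; have [U HU] := le_selection HI WI.
  apply: nIW; rewrite (selection_ge HI HU); apply: Hmax.
  by rewrite -(eval_dia_tr_selection HCC HP HU).
Qed.

End Translation.

(* [uniq pp] and the absence of implications in bodies make [tr] a logic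
   program; the equivalence itself does not depend on them. *)
Theorem mainTheorem1 (Fn : Type) (Pr : eqType) (ar : Pr -> nat) (pp : seq Pr)
  (C : seq (crule Fn Pr)) (L : seq (lrule Fn Pr)) (S : seq (srule Fn Pr))
  (Dr : seq (drule Fn Pr)) :
  uniq pp ->
  (forall r, List.In r (L) -> lpred (lhead r) \in pp) ->
  (forall r, List.In r (S) -> lpred (shead1 r) \in pp /\ lpred (shead2 r) \in pp) ->
  (forall r, List.In r (Dr) -> forall l, List.In l (dhead r) -> lpred l \in pp) ->
  (forall r, List.In r (rules_of C L S Dr) -> wf ar (rhead r) /\ wf ar (rbody r)) ->
  (forall r, List.In r (rules_of C L S Dr) -> noimp (rbody r)) ->
  forall (D : Type) (fI : Fn -> seq D -> D) (I : Pr + Pr -> seq D -> Prop)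
         (env : nat -> D),
    SM fI (intens pp) (fun v => ar (hatv v)) I env (tr ar pp C L S Dr) <->
    (causal_sem fI ar pp (rules_of C L S Dr) (fun p => I (inl p)) env /\
     eval fI I env (CC ar pp)).
Proof.
move=> _ hL hS hD Hwf _ D fI I env.
have wf_head r : List.In r (rules_of C L S Dr) -> wf ar (rhead r) by case/Hwf.
apply: SM_tr.
- move=> r Hr; apply: wf_lit_ok (hL r Hr) (wf_head (rule_of_l r) _).
  by rewrite /rules_of !List.in_app_iff; right; left; apply: List.in_map.
- move=> r Hr; have [H1 H2] := hS r Hr.
  have /andP[/andP[W1 _] /andP[W2 _]] : wf ar (rhead (rule_of_s r)).
    by apply: wf_head; rewrite /rules_of !List.in_app_iff; do 2 right; left; apply: List.in_map.
  by split; apply: wf_lit_ok.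
- move=> r Hr l Hl; apply: wf_lit_ok (hD r Hr l Hl) _.
  apply: wf_bigor (wf_head (rule_of_d r) _) _ (List.in_map _ _ _ Hl).
  by rewrite /rules_of !List.in_app_iff; do 3 right; apply: List.in_map.
Qed.
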